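(* Let $\mathcal{L}$ be an intuitionistic abstract logic. Then $(Expr_{\mathcal{L}},\le)$, with meet $\wedge$, join $\vee$, implication $\to$, least element $\bot$ and greatest element $\top$, is a Heyting algebra.
   Context: An abstract logic is a triple $\mathcal{L}=(Expr_{\mathcal{L}},Th_{\mathcal{L}},\mathcal{C}_{\mathcal{L}})$ where $Expr_{\mathcal{L}}$ is a set, $Th_{\mathcal{L}}$ a non-empty set of subsets of $Expr_{\mathcal{L}}$ (theories) closed under intersections of non-empty subfamilies, and $\mathcal{C}_{\mathcal{L}}$ a set of operations on $Expr_{\mathcal{L}}$. $\mathcal{L}$ is closed under union of chains if the union of every non-empty chain of theories is a theory. A theory $T$ is prime if $T=\bigcap\mathcal{T}$ with $\mathcal{T}\subseteq Th_{\mathcal{L}}$ non-empty finite implies $T\in\mathcal{T}$; totally prime if this holds for non-empty $\mathcal{T}$ of any size. $PTh_{\mathcal{L}}$, $TPTh_{\mathcal{L}}$ denote these sets. An intuitionistic abstract logic is one closed under union of chains with binary connectives $\vee,\wedge,\to$ and constants $\top,\bot$ such that for all $a,b$ and all $T\in TPTh_{\mathcal{L}}$: $a\vee b\in T$ iff $a\in T$ or $b\in T$; $a\wedge b\in T$ iff $a,b\in T$; $a\to b\in T$ iff for every totally prime $T'\supseteq T$, $a\in T'$ implies $b\in T'$; $\top$ lies in every theory and $\bot$ in none. The order: $a\le b$ iff $S_a\subseteq S_b$, where $S_a=\{P\in PTh_{\mathcal{L}}: a\in P\}$; the paper identifies $a,b$ when $a\le b$ and $b\le a$. *)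

From HB Require Import structures.
From mathcomp Require Import all_boot.
From mathcomp Require Import boolp classical_sets cardinality.
Unset Printing Implicit Defensive.
Local Open Scope classical_set_scope.

Definition operation (E : Type) := {n : nat & ('I_n -> E) -> E}.

Definition binop_op {E : Type} (f : E -> E -> E) : operation E :=
  existT _ 2 (fun v : 'I_2 -> E => f (v ord0) (v ord_max)).
Definition const_op {E : Type} (c : E) : operation E :=
  existT _ 0 (fun _ : 'I_0 -> E => c).

Record abstract_logic := AbstractLogic {
  Expr : Type;
  Th : set (set Expr);
  Ops : set (operation Expr);
  Th_nonempty : Th !=set0;
  Th_capT : forall F : set (set Expr), F !=set0 -> F `<=` Th ->
     Th (\bigcap_(T in F) T)
}.

Section AbstractLogicDefs.
Variable L : abstract_logic.
Local Notation E := (Expr L).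

Definition chain (F : set (set E)) :=
  forall T1 T2, F T1 -> F T2 -> T1 `<=` T2 \/ T2 `<=` T1.

Definition closed_union_chains :=
  forall F : set (set E), F !=set0 -> F `<=` Th L -> chain F ->
    Th L (\bigcup_(T in F) T).

Definition prime_theory (T : set E) :=
  Th L T /\
  forall F : set (set E), F !=set0 -> finite_set F -> F `<=` Th L ->
    T = \bigcap_(U in F) U -> F T.

Definition totally_prime_theory (T : set E) :=
  Th L T /\
  forall F : set (set E), F !=set0 -> F `<=` Th L ->
    T = \bigcap_(U in F) U -> F T.

Definition PTh : set (set E) := prime_theory.
Definition TPTh : set (set E) := totally_prime_theory.

Definition S_ (a : E) : set (set E) := [set P | PTh P /\ P a].
Definition le_L (a b : E) : Prop := S_ a `<=` S_ b.

End AbstractLogicDefs.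

Definition intuitionistic (L : abstract_logic)
  (vee wedge imp : Expr L -> Expr L -> Expr L) (top bot : Expr L) : Prop :=
  closed_union_chains L /\
  [/\ [/\ Ops L (binop_op vee), Ops L (binop_op wedge), Ops L (binop_op imp),
          Ops L (const_op top) & Ops L (const_op bot)],
      (forall a b T, TPTh L T -> (T (vee a b) <-> T a \/ T b)),
      (forall a b T, TPTh L T -> (T (wedge a b) <-> T a /\ T b)),
      (forall a b T, TPTh L T ->
          (T (imp a b) <-> forall T', TPTh L T' -> T `<=` T' -> T' a -> T' b)) &
      ((forall T, Th L T -> T top) /\ (forall T, Th L T -> ~ T bot))].

(* Heyting algebra on a preordered set (E, le), understood up to the
   identification a ~ b iff le a b /\ le b a: a bounded lattice with meet,
   join, least and greatest element, and relative pseudocomplement. *)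
Definition heyting_preorder {E : Type} (le : E -> E -> Prop)
  (meet join imp : E -> E -> E) (bot top : E) : Prop :=
  [/\ (forall a, le a a) /\ (forall a b c, le a b -> le b c -> le a c),
      (forall a b c, le c (meet a b) <-> le c a /\ le c b),
      (forall a b c, le (join a b) c <-> le a c /\ le b c),
      (forall a, le bot a /\ le a top) &
      (forall a b c, le (meet c a) b <-> le c (imp a b))].

From mathcomp Require Import all_boot boolp classical_sets cardinality.
Local Open Scope classical_set_scope.

(* A Lindenbaum argument (Zorn's lemma, using closure under unions of chains)
   extends every theory omitting b to a totally prime theory omitting b, so
   a <= b holds iff every totally prime theory containing a contains b.
   Totally prime theories then behave like the worlds of a Kripke model, in
   which the defining clauses of the connectives are exactly the Heyting
   algebra laws. *)

Definition entails {E : Type} (W : set (set E)) (a b : E) : Prop :=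
  forall T, W T -> T a -> T b.

Lemma heyting_preorder_equiv {E : Type} {le le' : E -> E -> Prop}
    {meet join imp : E -> E -> E} {bot top : E} :
  (forall a b, le a b <-> le' a b) ->
  heyting_preorder le' meet join imp bot top ->
  heyting_preorder le meet join imp bot top.
Proof.
move=> eqle [[refl trans] meetP joinP botop impP]; split.
- split=> [a|a b c]; rewrite ?eqle //; exact: trans.
- by move=> a b c; rewrite !eqle.
- by move=> a b c; rewrite !eqle.
- by move=> a; rewrite !eqle.
- by move=> a b c; rewrite !eqle.
Qed.

Section KripkeHeyting.
Variables (E : Type) (W : set (set E)).
Variables (vee wedge imp : E -> E -> E) (top bot : E).
Hypothesis veeP : forall a b T, W T -> (T (vee a b) <-> T a \/ T b).
Hypothesis wedgeP : forall a b T, W T -> (T (wedge a b) <-> T a /\ T b).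
Hypothesis impP : forall a b T, W T ->
  (T (imp a b) <-> forall T', W T' -> T `<=` T' -> T' a -> T' b).
Hypothesis topP : forall T, W T -> T top.
Hypothesis botP : forall T, W T -> ~ T bot.

Lemma entails_heyting : heyting_preorder (entails W) wedge vee imp bot top.
Proof.
split.
- split=> [a T _ //|a b c ab bc T WT Ta]; exact: bc (ab T WT Ta).
- move=> a b c; split.
  + by move=> cab; split=> T WT /(cab T WT) /(wedgeP _ _ _ WT) [].
  + by move=> [ca cb] T WT Tc; apply/wedgeP => //; split; [exact: ca|exact: cb].
- move=> a b c; split.
  + move=> abc; split=> T WT Tx; apply: abc => //; apply/(veeP _ _ _ WT).
    * by left.
    * by right.
  + by move=> [ac bc] T WT /(veeP _ _ _ WT) [Ta|Tb]; [exact: ac|exact: bc].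
- by move=> a; split=> T WT Tx; [case: (botP T WT Tx) | exact: topP].
- move=> a b c; split.
  + move=> cab T WT Tc; apply/impP => // T' WT' TT' T'a.
    by apply: cab => //; apply/wedgeP => //; split => //; exact: TT'.
  + by move=> cab T WT /(wedgeP _ _ _ WT) [/(cab T WT) /(impP _ _ _ WT)]; apply.
Qed.

End KripkeHeyting.

Section TotallyPrimeTheories.
Variable L : abstract_logic.
Local Notation E := (Expr L).

Lemma tprime_prime {T : set E} : TPTh L T -> PTh L T.
Proof. by case=> ThT tpT; split=> // F Fne _; exact: tpT. Qed.

Lemma maximal_omitting_tprime {M : set E} {b : E} :
  Th L M -> ~ M b -> (forall U, Th L U -> M `<` U -> U b) -> TPTh L M.
Proof.
move=> ThM nMb Mmax; split=> // F Fne FTh MF.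
have MU U : F U -> M `<=` U by rewrite MF; exact: bigcap_inf.
apply: contrapT => nFM; apply: nMb; rewrite MF => U FU.
apply: (Mmax U (FTh U FU)); split; first exact: MU.
move=> UM; apply: nFM; rewrite (_ : M = U) //.
by apply/seteqP; split; [exact: MU|].
Qed.

Hypothesis cuc : closed_union_chains L.

Lemma exists_maximal_omitting {P : set E} {b : E} :
  Th L P -> ~ P b ->
  exists M, [/\ Th L M, P `<=` M, ~ M b & forall U, Th L U -> M `<` U -> U b].
Proof.
move=> ThP nPb.
(* Zorn is applied to the sets Q with P `|` Q a theory omitting b: unlike
   the theories omitting b themselves, they include the empty chain's union. *)
pose Z := [set Q : set E | Th L (P `|` Q) /\ ~ (P `|` Q) b].
have [A [[ThPA nPAb] Amax]] : exists A, Z A /\ forall B, A `<` B -> ~ Z B.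
  apply: Zorn_bigcup => F FZ Fchain.
  have [->|Fne] := eqVneq F set0.
    by rewrite /Z /= bigcup_set0 setU0; split => //; case.
  have Fn0 : F !=set0 by exact/set0P.
  split.
  - rewrite -bigcupUr // -(bigcup_image F (setU P) id); apply: cuc.
    + by case: Fn0 => Q FQ; exists (P `|` Q), Q.
    + by move=> _ [Q FQ <-]; case: (FZ Q FQ).
    + move=> _ _ [Q1 FQ1 <-] [Q2 FQ2 <-].
      by case: (Fchain Q1 Q2 FQ1 FQ2) => ?; [left|right]; exact: setUS.
  - by case=> [//|[Q FQ Qb]]; apply: (FZ Q FQ).2; right.
exists (P `|` A); split=> // U ThU [PAU nUPA].
apply: contrapT => nUb.
have PU : P `<=` U by move=> x Px; apply: PAU; left.
have AU : A `<` U.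
  split=> [x Ax|UA]; first by apply: PAU; right.
  by apply: nUPA => x Ux; right; exact: UA.
apply: (Amax U AU); split; first by rewrite (setUidPr P U).2.
by case=> // /PU.
Qed.

Lemma le_L_tprimeP (a b : E) : le_L L a b <-> entails (TPTh L) a b.
Proof.
split=> [ab T TPT Ta | ab P [PrP Pa]].
- by case: (ab T (conj (tprime_prime TPT) Ta)).
- split=> //; apply: contrapT => nPb.
  have [M [ThM PM nMb Mmax]] := exists_maximal_omitting PrP.1 nPb.
  exact: nMb (ab M (maximal_omitting_tprime ThM nMb Mmax) (PM a Pa)).
Qed.

End TotallyPrimeTheories.

Theorem corollary4p3 (L : abstract_logic)
  (vee wedge imp : Expr L -> Expr L -> Expr L) (top bot : Expr L) :
  intuitionistic L vee wedge imp top bot ->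
  heyting_preorder (@le_L L) wedge vee imp bot top.
Proof.
move=> [cuc [_ veeP wedgeP impP [topP botP]]].
apply: (heyting_preorder_equiv (le_L_tprimeP _ cuc)).
by apply: entails_heyting => // T [ThT _]; [exact: topP | exact: botP].
Qed.
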